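(* Consider the setting described in the context, where only the dissipative part of the numerical flux is kept, i.e. the numerical flux is $\Phi_{i+1/2}=-\tfrac12 D_{i+1/2}(u_R-u_L)_{i+1/2}$ (equivalently $f_L=f_R=0$). Let $\mathcal{E}_j=(\Phi_{j+1/2}-\Phi_{j-1/2})/h$. Then, as $h\to 0$ with all derivatives evaluated at $x_j$: (i) if $\kappa_3=\kappa-1$, $$\mathcal{E}_j=\frac{\kappa-1}{32}\left[\frac{\partial D}{\partial x}\frac{\partial^5 u}{\partial x^5}+D(u(x_j))\frac{\partial^6 u}{\partial x^6}\right]h^5+O(h^7);$$ (ii) if $\kappa_3=0$, $$\mathcal{E}_j=-\frac{\kappa-1}{8}\left[\frac{\partial D}{\partial x}\frac{\partial^3 u}{\partial x^3}+D(u(x_j))\frac{\partial^4 u}{\partial x^4}\right]h^3+O(h^5).$$ Here $\partial D/\partial x$ denotes $\frac{d}{dx}D(u(x))$.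
   Context: Let $h>0$ and consider the uniform one-dimensional grid $x_i=ih$, $i\in\mathbb{Z}$. Let $u$ be a smooth ($C^\infty$) real function of $x$ and $u_i=u(x_i)$. Let $D$ be a smooth real function of one variable (dissipation coefficient). Nodal derivative approximations are obtained by successive central differencing: $(u_x)_i=(u_{i+1}-u_{i-1})/(2h)$ and $(u_{xx})_i=((u_x)_{i+1}-(u_x)_{i-1})/(2h)$. At the face $i+1/2$, with $j=i$, $k=i+1$, and parameters $\kappa,\kappa_3\in\mathbb{R}$, the reconstructed states are $u_L=\kappa\frac{u_j+u_k}{2}+(1-\kappa)\left[u_j+\frac h2(u_x)_j\right]+\kappa_3T_j$, $u_R=\kappa\frac{u_j+u_k}{2}+(1-\kappa)\left[u_k-\frac h2(u_x)_k\right]+\kappa_3T_k$, where $T_j=\frac h4\big((u_x)_k-(u_x)_j\big)-\frac{h^2}{4}(u_{xx})_j$ and $T_k=\frac h4\big((u_x)_k-(u_x)_j\big)-\frac{h^2}{4}(u_{xx})_k$; these are denoted $(u_L)_{i+1/2},(u_R)_{i+1/2}$. The face dissipation coefficient is $D_{i+1/2}=\bar D(u_i,u_{i+1})$, where $\bar D$ is a smooth symmetric function of two variables with $\bar D(v,v)=D(v)$ (e.g. $D$ evaluated at an average state). *)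

From Stdlib Require Import Reals ZArith List.
From Coquelicot Require Import Coquelicot.
Open Scope R_scope.

Definition smooth1 (f : R -> R) : Prop :=
  forall (n : nat) (x : R), ex_derive_n f n x.

(** Iterated partial derivatives of a function of two real variables;
    [true] = differentiate in the first variable, [false] = in the second.
    The head of the list is the last derivative taken. *)
Fixpoint pderiv (l : list bool) (f : R -> R -> R) : R -> R -> R :=
  match l with
  | nil => f
  | true :: l' => fun a b => Derive (fun t => pderiv l' f t b) a
  | false :: l' => fun a b => Derive (fun t => pderiv l' f a t) b
  end.

Definition smooth2 (f : R -> R -> R) : Prop :=
  forall (l : list bool) (a b : R),
    ex_derive (fun t => pderiv l f t b) a /\
    ex_derive (fun t => pderiv l f a t) b /\
    continuity_2d_pt (pderiv l f) a b.

Definition ux (U : Z -> R) (h : R) (i : Z) : R :=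
  (U (i + 1)%Z - U (i - 1)%Z) / (2 * h).

Definition uxx (U : Z -> R) (h : R) (i : Z) : R :=
  (ux U h (i + 1)%Z - ux U h (i - 1)%Z) / (2 * h).

(** Correction terms T_j and T_k at face i+1/2 (j = i, k = i+1). *)
Definition Tj (U : Z -> R) (h : R) (i : Z) : R :=
  h / 4 * (ux U h (i + 1)%Z - ux U h i) - h ^ 2 / 4 * uxx U h i.

Definition Tk (U : Z -> R) (h : R) (i : Z) : R :=
  h / 4 * (ux U h (i + 1)%Z - ux U h i) - h ^ 2 / 4 * uxx U h (i + 1)%Z.

(** Reconstructed states (u_L)_{i+1/2}, (u_R)_{i+1/2}. *)
Definition uL (kappa kappa3 : R) (U : Z -> R) (h : R) (i : Z) : R :=
  kappa * (U i + U (i + 1)%Z) / 2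
  + (1 - kappa) * (U i + h / 2 * ux U h i)
  + kappa3 * Tj U h i.

Definition uR (kappa kappa3 : R) (U : Z -> R) (h : R) (i : Z) : R :=
  kappa * (U i + U (i + 1)%Z) / 2
  + (1 - kappa) * (U (i + 1)%Z - h / 2 * ux U h (i + 1)%Z)
  + kappa3 * Tk U h i.

Definition Phi (Dbar : R -> R -> R) (kappa kappa3 : R) (U : Z -> R) (h : R)
    (i : Z) : R :=
  - / 2 * Dbar (U i) (U (i + 1)%Z) * (uR kappa kappa3 U h i - uL kappa kappa3 U h i).

Definition Eerr (Dbar : R -> R -> R) (kappa kappa3 : R) (U : Z -> R) (h : R)
    (j : Z) : R :=
  (Phi Dbar kappa kappa3 U h j - Phi Dbar kappa kappa3 U h (j - 1)%Z) / h.

Definition gridvals (u : R -> R) (x h : R) (j : Z) : Z -> R :=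
  fun i => u (x + IZR (i - j) * h).

(* Write B(i) = D_{i+1/2} and J(i) = (u_R - u_L)_{i+1/2}, so that
   h E_j = -(B(j) J(j) - B(j-1) J(j-1)) / 2.  Splitting the flux difference into
   (B(j) - B(j-1)) (J(j) + J(j-1)) and (B(j) + B(j-1)) (J(j) - J(j-1)) leaves factors whose
   expansions in h are each even or odd.  Expanding Dbar (u x) around u x and composing with the
   expansion of u gives B(j) - B(j-1) = h dD/dx + O(h^3), since symmetry of Dbar makes D' twice
   the partial derivative of Dbar on the diagonal, and (B(j) + B(j-1)) / 2 = D + O(h^2).  The
   jump is a fixed six-point stencil of nodal values, so expanding u to order 7 gives
   J(j) + J(j-1) = a h^p + O(h^(p+2)) and J(j) - J(j-1) = b h^(p+1) + O(h^(p+3)), with p = 3 in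
   general and p = 5 when kappa3 = kappa - 1 cancels the h^3 and h^4 terms. *)

From Stdlib Require Import Reals ZArith Lra Lia Psatz.
From Coquelicot Require Import Coquelicot.
Open Scope R_scope.

Definition bigO (n : nat) (f : R -> R) : Prop :=
  exists C d : R, 0 < d /\ forall h : R, 0 < h < d -> Rabs (f h) <= C * h ^ n.

Definition locally_bigO (n : nat) (g : R -> R) : Prop :=
  exists M e : R, 0 < e /\ forall y : R, Rabs y < e -> Rabs (g y) <= M * Rabs y ^ n.

Lemma bigO_ext n f g : (forall h, 0 < h -> f h = g h) -> bigO n f -> bigO n g.
Proof.
  intros Efg [C [d [Hd Hf]]]. exists C, d; split; [exact Hd |].
  intros h Hh. rewrite <- Efg by lra. auto.
Qed.

Lemma bigO_add n f g : bigO n f -> bigO n g -> bigO n (fun h => f h + g h).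
Proof.
  intros [C1 [d1 [Hd1 Hf]]] [C2 [d2 [Hd2 Hg]]].
  exists (C1 + C2), (Rmin d1 d2); split; [now apply Rmin_glb_lt |].
  intros h [Hh0 Hh]. apply Rmin_Rgt in Hh as [Hh1 Hh2].
  specialize (Hf h (conj Hh0 Hh1)). specialize (Hg h (conj Hh0 Hh2)).
  pose proof (Rabs_triang (f h) (g h)). lra.
Qed.

Lemma bigO_scal n c f : bigO n f -> bigO n (fun h => c * f h).
Proof.
  intros [C [d [Hd Hf]]]. exists (Rabs c * C), d; split; [exact Hd |].
  intros h Hh. rewrite Rabs_mult, Rmult_assoc.
  apply Rmult_le_compat_l; [apply Rabs_pos | auto].
Qed.

Lemma bigO_sub n f g : bigO n f -> bigO n g -> bigO n (fun h => f h - g h).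
Proof.
  intros Hf Hg. apply (bigO_ext _ (fun h => f h + -1 * g h)); [intros; ring |].
  apply bigO_add; [exact Hf | now apply bigO_scal].
Qed.

Lemma bigO_mul n m f g : bigO n f -> bigO m g -> bigO (n + m) (fun h => f h * g h).
Proof.
  intros [C1 [d1 [Hd1 Hf]]] [C2 [d2 [Hd2 Hg]]].
  exists (C1 * C2), (Rmin d1 d2); split; [now apply Rmin_glb_lt |].
  intros h [Hh0 Hh]. apply Rmin_Rgt in Hh as [Hh1 Hh2].
  specialize (Hf h (conj Hh0 Hh1)). specialize (Hg h (conj Hh0 Hh2)).
  rewrite Rabs_mult, pow_add.
  replace (C1 * C2 * (h ^ n * h ^ m)) with ((C1 * h ^ n) * (C2 * h ^ m)) by ring.
  apply Rmult_le_compat; auto using Rabs_pos.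
Qed.

Lemma bigO_weaken n m f : (m <= n)%nat -> bigO n f -> bigO m f.
Proof.
  intros Hmn [C [d [Hd Hf]]].
  exists (Rabs C), (Rmin d 1); split; [apply Rmin_glb_lt; lra |].
  intros h [Hh0 Hh]. apply Rmin_Rgt in Hh as [Hhd Hh1].
  specialize (Hf h (conj Hh0 Hhd)).
  assert (Hpow : h ^ n <= h ^ m).
  { replace n with (m + (n - m))%nat by lia. rewrite pow_add.
    assert (0 <= h ^ m) by (apply pow_le; lra).
    assert (h ^ (n - m) <= 1) by (rewrite <- (pow1 (n - m)); apply pow_incr; lra).
    nra. }
  assert (0 <= h ^ n) by (apply pow_le; lra).
  pose proof (Rle_abs C). pose proof (Rabs_pos C). nra.
Qed.

Lemma bigO_monomial n c : bigO n (fun h => c * h ^ n).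
Proof.
  exists (Rabs c), 1; split; [lra |]. intros h Hh.
  rewrite Rabs_mult, (Rabs_pos_eq (h ^ n)) by (apply pow_le; lra). lra.
Qed.

Lemma bigO_add_monomial n m c f :
  (n <= m)%nat -> bigO n f -> bigO n (fun h => f h + c * h ^ m).
Proof.
  intros Hnm Hf. apply bigO_add; [exact Hf |].
  apply (bigO_weaken m); [exact Hnm | apply bigO_monomial].
Qed.

Lemma bigO_div n f : bigO (S n) f -> bigO n (fun h => f h / h).
Proof.
  intros [C [d [Hd Hf]]]. exists C, d; split; [exact Hd |]. intros h Hh.
  specialize (Hf h Hh). simpl in Hf.
  unfold Rdiv. rewrite Rabs_mult, Rabs_inv, (Rabs_pos_eq h) by lra.
  apply (Rmult_le_reg_r h); [lra |]. rewrite Rmult_assoc, Rinv_l by lra. lra.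
Qed.

Lemma bigO_comp n g d : locally_bigO n g -> bigO 1 d -> bigO n (fun h => g (d h)).
Proof.
  intros [M [e [He Hg]]] [C [d0 [Hd0 Hd]]].
  set (K := Rabs C + 1). assert (HK : 0 < K) by (pose proof (Rabs_pos C); unfold K; lra).
  exists (Rabs M * K ^ n), (Rmin d0 (e / K)); split.
  { apply Rmin_glb_lt; [exact Hd0 | apply Rdiv_lt_0_compat; lra]. }
  intros h [Hh0 Hh]. apply Rmin_Rgt in Hh as [Hhd Hhe].
  specialize (Hd h (conj Hh0 Hhd)). rewrite pow_1 in Hd.
  assert (Hdh : Rabs (d h) <= K * h) by (pose proof (Rle_abs C); unfold K; nra).
  assert (HKh : K * h < e).
  { apply (Rmult_lt_compat_l K) in Hhe; [| exact HK].
    replace (K * (e / K)) with e in Hhe by (field; lra). exact Hhe. }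
  apply Rle_trans with (Rabs M * Rabs (d h) ^ n).
  - eapply Rle_trans; [apply Hg; lra |].
    apply Rmult_le_compat_r; [apply pow_le, Rabs_pos | apply Rle_abs].
  - rewrite Rmult_assoc, <- Rpow_mult_distr.
    apply Rmult_le_compat_l; [apply Rabs_pos |].
    apply pow_incr. split; [apply Rabs_pos | exact Hdh].
Qed.

Definition taylor_poly (f : R -> R) (x : R) (N : nat) (t : R) : R :=
  sum_f_R0 (fun m => t ^ m / INR (fact m) * Derive_n f m x) N.

Lemma taylor_poly_0 f x N : taylor_poly f x N 0 = f x.
Proof.
  unfold taylor_poly. induction N as [| N IHN]; simpl sum_f_R0.
  - simpl. field.
  - rewrite IHN. simpl pow. rewrite Rmult_0_l. unfold Rdiv. ring.
Qed.

Lemma taylor_poly_2 f x t :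
  taylor_poly f x 2 t = f x + t * Derive_n f 1 x + t ^ 2 / 2 * Derive_n f 2 x.
Proof.
  unfold taylor_poly. cbn [sum_f_R0]. rewrite !INR_IZR_INZ. simpl Z.of_nat.
  simpl Derive_n at 1. field.
Qed.

Lemma taylor_poly_7 f x t :
  taylor_poly f x 7 t = f x + t * Derive_n f 1 x + t ^ 2 / 2 * Derive_n f 2 x
    + t ^ 3 / 6 * Derive_n f 3 x + t ^ 4 / 24 * Derive_n f 4 x
    + t ^ 5 / 120 * Derive_n f 5 x + t ^ 6 / 720 * Derive_n f 6 x
    + t ^ 7 / 5040 * Derive_n f 7 x.
Proof.
  unfold taylor_poly. cbn [sum_f_R0]. rewrite !INR_IZR_INZ. simpl Z.of_nat.
  simpl Derive_n at 1. field.
Qed.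

(* [Taylor_Lagrange] only expands to the right; left expansions come from [fun y => f (- y)]. *)
Lemma taylor_lagrange_two_sided f x N t : smooth1 f -> t <> 0 ->
  exists z, Rabs (z - x) < Rabs t /\
    f (x + t) = taylor_poly f x N t + t ^ S N / INR (fact (S N)) * Derive_n f (S N) z.
Proof.
  intros Hf Ht. destruct (Rlt_or_le 0 t) as [Htpos | Htneg].
  - destruct (Taylor_Lagrange f N x (x + t)) as [z [Hz E]]; [lra | auto |].
    exists z. rewrite !Rabs_pos_eq by lra. split; [lra |].
    replace (x + t - x) with t in E by ring. exact E.
  - set (g := fun y => f (- y)).
    assert (Hg : forall n y, Derive_n g n y = (-1) ^ n * Derive_n f n (- y)).
    { intros n y. apply Derive_n_comp_opp, filter_forall. auto. }
    destruct (Taylor_Lagrange g N (- x) (- x - t)) as [z [Hz E]]; [lra | |].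
    { intros y _ k _. apply ex_derive_n_comp_opp, filter_forall. auto. }
    exists (- z). rewrite !Rabs_left by lra. split; [lra |].
    unfold g at 1 in E. replace (- (- x - t)) with (x + t) in E by ring.
    replace (- x - t - - x) with (-1 * t) in E by ring.
    assert (Hsign : forall n c, (-1 * t) ^ n * ((-1) ^ n * c) = t ^ n * c).
    { intros n c. rewrite Rpow_mult_distr.
      replace ((-1) ^ n * t ^ n * ((-1) ^ n * c)) with (((-1) * (-1)) ^ n * t ^ n * c)
        by (rewrite Rpow_mult_distr; ring).
      replace (-1 * -1) with 1 by ring. rewrite pow1. ring. }
    rewrite E. unfold taylor_poly. f_equal.
    + apply sum_eq. intros m _. rewrite Hg, Ropp_involutive.
      unfold Rdiv. rewrite <- Hsign. ring.
    + rewrite Hg. unfold Rdiv. rewrite <- Hsign. ring.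
Qed.

Lemma continuous_bounded_near (g : R -> R) (x : R) : continuous g x ->
  exists d, 0 < d /\ forall z, Rabs (z - x) < d -> Rabs (g z) <= Rabs (g x) + 1.
Proof.
  intros Hc. apply continuity_pt_filterlim in Hc.
  destruct (Hc 1 Rlt_0_1) as [d [Hd Hball]]. exists d; split; [exact Hd |].
  intros z Hz. destruct (Req_dec z x) as [-> | Hne]; [lra |].
  assert (Hgz : Rabs (g z - g x) < 1) by (apply (Hball z); repeat split; auto).
  pose proof (Rabs_triang (g z - g x) (g x)).
  replace (g z - g x + g x) with (g z) in * by ring. lra.
Qed.

Lemma taylor_remainder_bigO f x N : smooth1 f ->
  locally_bigO (S N) (fun t => f (x + t) - taylor_poly f x N t).
Proof.
  intros Hf. set (g := Derive_n f (S N)).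
  destruct (continuous_bounded_near g x) as [d [Hd Hg]].
  { apply (@ex_derive_continuous R_AbsRing R_NormedModule). exact (Hf (S (S N)) x). }
  set (F := INR (fact (S N))). assert (HF : 0 < F) by apply INR_fact_lt_0.
  exists ((Rabs (g x) + 1) / F), d; split; [exact Hd |].
  intros t Ht. destruct (Req_dec t 0) as [-> | Ht0].
  - rewrite Rplus_0_r, taylor_poly_0, Rminus_diag, Rabs_R0, pow_i by lia.
    lra.
  - destruct (taylor_lagrange_two_sided f x N t Hf Ht0) as [z [Hz E]].
    rewrite E. fold g F.
    assert (Hgz : Rabs (g z) <= Rabs (g x) + 1) by (apply Hg; lra).
    rewrite RPow_abs. set (T := t ^ S N).
    replace (taylor_poly f x N t + T / F * g z - taylor_poly f x N t)
      with (/ F * (T * g z)) by (unfold Rdiv; ring).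
    rewrite Rabs_mult, Rabs_mult, Rabs_inv, (Rabs_pos_eq F) by lra.
    assert (0 <= Rabs T) by apply Rabs_pos.
    assert (0 < / F) by (apply Rinv_0_lt_compat; lra).
    replace ((Rabs (g x) + 1) / F * Rabs T) with (/ F * (Rabs T * (Rabs (g x) + 1)))
      by (unfold Rdiv; ring).
    apply Rmult_le_compat_l; [lra |]. now apply Rmult_le_compat_l.
Qed.

Lemma taylor_grid f x N s : smooth1 f ->
  bigO (S N) (fun h => f (x + s * h) - taylor_poly f x N (s * h)).
Proof.
  intros Hf. apply (bigO_comp _ (fun t => f (x + t) - taylor_poly f x N t)).
  - now apply taylor_remainder_bigO.
  - apply (bigO_ext _ (fun h => s * h ^ 1)); [intros; ring | apply bigO_monomial].
Qed.

Definition jump (kappa kappa3 : R) (U : Z -> R) (h : R) (i : Z) : R :=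
  uR kappa kappa3 U h i - uL kappa kappa3 U h i.

Lemma jump_stencil kappa kappa3 U h i : h <> 0 ->
  jump kappa kappa3 U h i =
    (1 - kappa) / 4 * (U (i - 1)%Z - 3 * U i + 3 * U (i + 1)%Z - U (i + 2)%Z)
    + kappa3 / 16 * (U (i - 2)%Z - U (i - 1)%Z - 2 * U i + 2 * U (i + 1)%Z
                     + U (i + 2)%Z - U (i + 3)%Z).
Proof.
  intros Hh. unfold jump, uR, uL, Tj, Tk, uxx, ux.
  rewrite ?Z.add_simpl_r, ?Z.sub_add.
  replace (i + 1 + 1 + 1)%Z with (i + 3)%Z by ring.
  replace (i + 1 + 1)%Z with (i + 2)%Z by ring.
  replace (i - 1 - 1)%Z with (i - 2)%Z by ring.
  field. exact Hh.
Qed.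

Lemma gridvals_offset u x h j e m :
  (e - j)%Z = m -> gridvals u x h j e = u (x + IZR m * h).
Proof. intros <-. reflexivity. Qed.

Ltac grid_nodes :=
  repeat match goal with |- context [gridvals ?u ?x ?h ?j ?e] =>
    first [ rewrite (gridvals_offset u x h j e 0) by ring
          | rewrite (gridvals_offset u x h j e 1) by ring
          | rewrite (gridvals_offset u x h j e (-1)) by ring
          | rewrite (gridvals_offset u x h j e 2) by ring
          | rewrite (gridvals_offset u x h j e (-2)) by ring
          | rewrite (gridvals_offset u x h j e 3) by ring
          | rewrite (gridvals_offset u x h j e (-3)) by ring ]
  end.

Section JumpExpansions.

Variables (u : R -> R) (x kappa kappa3 : R) (j : Z).
Hypothesis Hu : smooth1 u.

(* In the witnesses below [rem s] carries the combined stencil weight of node j + s, so that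
   the Taylor polynomials of the nodal values add up to the stated monomials. *)
Let rem s h := u (x + s * h) - taylor_poly u x 7 (s * h).

Ltac remainders_bigO :=
  repeat first [ exact (taylor_grid u x 7 _ Hu)
               | apply bigO_scal | apply bigO_sub | apply bigO_add ].

Lemma jump_sum_expansion :
  bigO 8 (fun h => jump kappa kappa3 (gridvals u x h j) h j
                   + jump kappa kappa3 (gridvals u x h j) h (j - 1)
    - ((kappa - 1 - kappa3) / 2 * Derive_n u 3 x * h ^ 3
       + (kappa - 1 - 2 * kappa3) / 8 * Derive_n u 5 x * h ^ 5
       + (3 * (kappa - 1) - 13 * kappa3) / 240 * Derive_n u 7 x * h ^ 7)).
Proof.
  apply (bigO_ext _ (fun h => kappa3 / 16 * rem (-3) h + (1 - kappa) / 4 * rem (-2) h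
      - ((1 - kappa) / 2 + 3 * kappa3 / 16) * (rem (-1) h - rem 1 h)
      - (1 - kappa) / 4 * rem 2 h - kappa3 / 16 * rem 3 h)).
  - intros h Hh. rewrite !jump_stencil by lra. grid_nodes.
    unfold rem. rewrite !taylor_poly_7. field.
  - remainders_bigO.
Qed.

Lemma jump_diff_expansion :
  bigO 8 (fun h => jump kappa kappa3 (gridvals u x h j) h j
                   - jump kappa kappa3 (gridvals u x h j) h (j - 1)
    - ((kappa - 1 - kappa3) / 4 * Derive_n u 4 x * h ^ 4
       + (2 * (kappa - 1) - 5 * kappa3) / 48 * Derive_n u 6 x * h ^ 6)).
Proof.
  apply (bigO_ext _ (fun h => - kappa3 / 16 * (rem (-3) h + rem 3 h)
      + (kappa - 1 + kappa3 / 2) / 4 * (rem (-2) h + rem 2 h)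
      + (1 - kappa + kappa3 / 16) * (rem (-1) h + rem 1 h)
      - (3 * (1 - kappa) / 2 + kappa3 / 4) * rem 0 h)).
  - intros h Hh. rewrite !jump_stencil by lra. grid_nodes.
    unfold rem. rewrite !taylor_poly_7. field.
  - remainders_bigO.
Qed.

End JumpExpansions.

Lemma jump_expansions_kappa3_eq u x kappa j : smooth1 u ->
  bigO 7 (fun h => jump kappa (kappa - 1) (gridvals u x h j) h j
                   + jump kappa (kappa - 1) (gridvals u x h j) h (j - 1)
                   - - ((kappa - 1) / 8) * Derive_n u 5 x * h ^ 5) /\
  bigO 8 (fun h => jump kappa (kappa - 1) (gridvals u x h j) h j
                   - jump kappa (kappa - 1) (gridvals u x h j) h (j - 1)
                   - - ((kappa - 1) / 16) * Derive_n u 6 x * h ^ 6).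
Proof.
  intros Hu. split.
  - eapply bigO_ext;
      [| apply (bigO_add_monomial 7 7 (- (kappa - 1) / 24 * Derive_n u 7 x)); [lia |];
         apply (bigO_weaken 8); [lia |];
         exact (jump_sum_expansion u x kappa (kappa - 1) j Hu)].
    intros h _. cbv beta. field.
  - eapply bigO_ext; [| exact (jump_diff_expansion u x kappa (kappa - 1) j Hu)].
    intros h _. cbv beta. field.
Qed.

Lemma jump_expansions_kappa3_zero u x kappa j : smooth1 u ->
  bigO 5 (fun h => jump kappa 0 (gridvals u x h j) h j
                   + jump kappa 0 (gridvals u x h j) h (j - 1)
                   - (kappa - 1) / 2 * Derive_n u 3 x * h ^ 3) /\
  bigO 6 (fun h => jump kappa 0 (gridvals u x h j) h j
                   - jump kappa 0 (gridvals u x h j) h (j - 1)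
                   - (kappa - 1) / 4 * Derive_n u 4 x * h ^ 4).
Proof.
  intros Hu. split.
  - eapply bigO_ext;
      [| apply (bigO_add_monomial 5 7 ((kappa - 1) / 80 * Derive_n u 7 x)); [lia |];
         apply (bigO_add_monomial 5 5 ((kappa - 1) / 8 * Derive_n u 5 x)); [lia |];
         apply (bigO_weaken 8); [lia |];
         exact (jump_sum_expansion u x kappa 0 j Hu)].
    intros h _. cbv beta. field.
  - eapply bigO_ext;
      [| apply (bigO_add_monomial 6 6 ((kappa - 1) / 24 * Derive_n u 6 x)); [lia |];
         apply (bigO_weaken 8); [lia |];
         exact (jump_diff_expansion u x kappa 0 j Hu)].
    intros h _. cbv beta. field.
Qed.

Lemma smooth1_partial_r (Dbar : R -> R -> R) c : smooth2 Dbar -> smooth1 (Dbar c).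
Proof.
  intros HDbar.
  assert (E : forall n y, Derive_n (Dbar c) n y = pderiv (List.repeat false n) Dbar c y).
  { induction n as [| n IHn]; intros y; [reflexivity |].
    apply Derive_ext. exact IHn. }
  intros [| n] t; [exact I |].
  apply (ex_derive_ext (fun y => pderiv (List.repeat false n) Dbar c y)).
  - intros y. symmetry. apply E.
  - apply (HDbar (List.repeat false n) c t).
Qed.

Lemma mean_value_increment (g : R -> R) c t : (forall y, ex_derive g y) ->
  exists xi, Rabs (xi - c) <= Rabs t /\ g (c + t) - g c = Derive g xi * t.
Proof.
  intros Hg.
  destruct (MVT_gen g c (c + t) (Derive g)) as [xi [Hxi E]].
  - intros y _. apply Derive_correct, Hg.
  - intros y _. apply continuity_pt_filterlim.
    apply (@ex_derive_continuous R_AbsRing R_NormedModule), Hg.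
  - exists xi. replace (c + t - c) with t in E by ring. split; [| exact E].
    unfold Rmin, Rmax in Hxi. unfold Rabs.
    destruct (Rle_dec c (c + t)), (Rcase_abs (xi - c)), (Rcase_abs t); lra.
Qed.

Lemma is_derive_diagonal (Dbar : R -> R -> R) c :
  (forall a b, Dbar a b = Dbar b a) ->
  (forall a b, ex_derive (Dbar a) b) ->
  continuity_2d_pt (fun a b => Derive (Dbar a) b) c c ->
  is_derive (fun v => Dbar v v) c (2 * Derive (Dbar c) c).
Proof.
  intros Hsym Hder Hcont. apply is_derive_Reals. intros eps Heps.
  destruct (Hcont (mkposreal (eps / 2) ltac:(lra))) as [delta Hdelta].
  exists delta. intros t Ht0 Ht.
  destruct (mean_value_increment (Dbar (c + t)) c t (Hder (c + t))) as [xi1 [Hxi1 E1]].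
  destruct (mean_value_increment (Dbar c) c t (Hder c)) as [xi2 [Hxi2 E2]].
  (* Symmetry splits the diagonal increment into two increments in the second variable. *)
  assert (E : Dbar (c + t) (c + t) - Dbar c c
              = Derive (Dbar (c + t)) xi1 * t + Derive (Dbar c) xi2 * t).
  { rewrite <- E1, <- E2, (Hsym (c + t) c). ring. }
  rewrite E.
  replace ((Derive (Dbar (c + t)) xi1 * t + Derive (Dbar c) xi2 * t) / t
           - 2 * Derive (Dbar c) c)
    with ((Derive (Dbar (c + t)) xi1 - Derive (Dbar c) c)
          + (Derive (Dbar c) xi2 - Derive (Dbar c) c)) by (field; exact Ht0).
  assert (A1 := Hdelta (c + t) xi1 ltac:(replace (c + t - c) with t by ring; exact Ht)
                  ltac:(lra)).
  assert (A2 := Hdelta c xi2 ltac:(rewrite Rminus_diag, Rabs_R0; apply cond_pos)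
                  ltac:(lra)).
  simpl in A1, A2.
  eapply Rle_lt_trans; [apply Rabs_triang | lra].
Qed.

Lemma Derive_D_comp (u D : R -> R) (Dbar : R -> R -> R) x :
  smooth1 u -> smooth1 D -> smooth2 Dbar ->
  (forall a b, Dbar a b = Dbar b a) -> (forall v, Dbar v v = D v) ->
  Derive (fun t => D (u t)) x = 2 * Derive (Dbar (u x)) (u x) * Derive u x.
Proof.
  intros Hu HD HDbar Hsym Hdiag.
  assert (HD' : is_derive D (u x) (2 * Derive (Dbar (u x)) (u x))).
  { apply (is_derive_ext (fun v => Dbar v v)); [exact Hdiag |].
    apply is_derive_diagonal; [exact Hsym | |].
    - intros a b. exact (proj1 (proj2 (HDbar nil a b))).
    - exact (proj2 (proj2 (HDbar (cons false nil) (u x) (u x)))). }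
  rewrite Derive_comp; [| exact (HD 1%nat (u x)) | exact (Hu 1%nat x)].
  rewrite (is_derive_unique _ _ _ HD'). ring.
Qed.

Section FaceCoefficients.

Variables (u D : R -> R) (Dbar : R -> R -> R) (x : R).
Hypotheses (Hu : smooth1 u) (HD : smooth1 D) (HDbar : smooth2 Dbar)
  (Hsym : forall a b, Dbar a b = Dbar b a) (Hdiag : forall v, Dbar v v = D v).

Lemma increment_bigO s : bigO 1 (fun h => u (x + s * h) - u x).
Proof.
  apply (bigO_ext _ (fun h => u (x + s * h) - taylor_poly u x 0 (s * h))).
  - intros h _. unfold taylor_poly. simpl. field.
  - exact (taylor_grid u x 0 s Hu).
Qed.

Lemma partial_taylor_bigO s :
  bigO 3 (fun h => Dbar (u x) (u (x + s * h))
                   - taylor_poly (Dbar (u x)) (u x) 2 (u (x + s * h) - u x)).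
Proof.
  set (F := Dbar (u x)).
  set (G := fun y => F (u x + y) - taylor_poly F (u x) 2 y).
  apply (bigO_ext _ (fun h => G (u (x + s * h) - u x))).
  - intros h _. unfold G. now rewrite Rplus_minus.
  - apply bigO_comp; [| apply increment_bigO].
    apply taylor_remainder_bigO, smooth1_partial_r, HDbar.
Qed.

Lemma face_coeff_diff :
  bigO 3 (fun h => Dbar (u x) (u (x + h)) - Dbar (u (x - h)) (u x)
                   - Derive (fun t => D (u t)) x * h).
Proof.
  rewrite (Derive_D_comp u D Dbar x Hu HD HDbar Hsym Hdiag).
  set (F := Dbar (u x)).
  set (P := fun s h => F (u (x + s * h)) - taylor_poly F (u x) 2 (u (x + s * h) - u x)).
  set (Ru := fun s h => u (x + s * h) - taylor_poly u x 2 (s * h)).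
  set (d := fun s h => u (x + s * h) - u x).
  apply (bigO_ext _ (fun h => P 1 h - P (-1) h + Derive F (u x) * (Ru 1 h - Ru (-1) h)
    + Derive_n F 2 (u x) / 2
      * ((d 1 h - d (-1) h) * (Ru 1 h + Ru (-1) h + Derive_n u 2 x * h ^ 2)))).
  - intros h _. unfold P, Ru, d. rewrite !taylor_poly_2.
    change (Derive_n F 1 (u x)) with (Derive F (u x)).
    change (Derive_n u 1 x) with (Derive u x).
    rewrite (Hsym (u (x - h))).
    replace (x + 1 * h) with (x + h) by ring. replace (x + -1 * h) with (x - h) by ring.
    fold F. field.
  - apply bigO_add; [apply bigO_add; [apply bigO_sub |] |].
    + apply partial_taylor_bigO.
    + apply partial_taylor_bigO.
    + apply bigO_scal, bigO_sub; apply taylor_grid, Hu.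
    + apply bigO_scal, (bigO_mul 1 2); [apply bigO_sub; apply increment_bigO |].
      apply bigO_add_monomial; [lia |].
      apply (bigO_weaken 3); [lia |]. apply bigO_add; apply taylor_grid, Hu.
Qed.

Lemma face_coeff_mean :
  bigO 2 (fun h => (Dbar (u x) (u (x + h)) + Dbar (u (x - h)) (u x)) / 2 - D (u x)).
Proof.
  set (F := Dbar (u x)).
  set (P := fun s h => F (u (x + s * h)) - taylor_poly F (u x) 2 (u (x + s * h) - u x)).
  set (Ru := fun s h => u (x + s * h) - taylor_poly u x 2 (s * h)).
  set (d := fun s h => u (x + s * h) - u x).
  apply (bigO_ext _ (fun h => / 2 * (P 1 h + P (-1) h)
    + Derive F (u x) / 2 * (Ru 1 h + Ru (-1) h + Derive_n u 2 x * h ^ 2)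
    + Derive_n F 2 (u x) / 4 * (d 1 h * d 1 h + d (-1) h * d (-1) h))).
  - intros h _. unfold P, Ru, d. rewrite !taylor_poly_2.
    change (Derive_n F 1 (u x)) with (Derive F (u x)).
    change (Derive_n u 1 x) with (Derive u x).
    rewrite (Hsym (u (x - h))), <- Hdiag.
    replace (x + 1 * h) with (x + h) by ring. replace (x + -1 * h) with (x - h) by ring.
    fold F. field.
  - apply bigO_add; [apply bigO_add |].
    + apply bigO_scal, (bigO_weaken 3); [lia |]. apply bigO_add; apply partial_taylor_bigO.
    + apply bigO_scal, bigO_add_monomial; [lia |].
      apply (bigO_weaken 3); [lia |]. apply bigO_add; apply taylor_grid, Hu.
    + apply bigO_scal, bigO_add; apply (bigO_mul 1 1); apply increment_bigO.
Qed.

End FaceCoefficients.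

Lemma flux_difference_expansion p (Bp Bm Jp Jm : R -> R) dB B0 a b :
  bigO 3 (fun h => Bp h - Bm h - dB * h) ->
  bigO 2 (fun h => (Bp h + Bm h) / 2 - B0) ->
  bigO (p + 2) (fun h => Jp h + Jm h - a * h ^ p) ->
  bigO (p + 3) (fun h => Jp h - Jm h - b * h ^ S p) ->
  bigO (p + 2) (fun h => (- / 2 * Bp h * Jp h - - / 2 * Bm h * Jm h) / h
                         + (dB * a / 2 + B0 * b) / 2 * h ^ p).
Proof.
  intros HdB HB0 Hsum Hdiff.
  assert (Hsum' : bigO p (fun h => Jp h + Jm h)).
  { apply (bigO_ext _ (fun h => (Jp h + Jm h - a * h ^ p) + a * h ^ p)); [intros; ring |].
    apply bigO_add_monomial; [lia |]. apply (bigO_weaken (p + 2)); [lia | exact Hsum]. }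
  assert (Hdiff' : bigO (S p) (fun h => Jp h - Jm h)).
  { apply (bigO_ext _ (fun h => (Jp h - Jm h - b * h ^ S p) + b * h ^ S p)); [intros; ring |].
    apply bigO_add_monomial; [lia |]. apply (bigO_weaken (p + 3)); [lia | exact Hdiff]. }
  (* [Bp Jp - Bm Jm = (Bp - Bm) (Jp + Jm) / 2 + (Bp + Bm) / 2 (Jp - Jm)] *)
  apply (bigO_ext _ (fun h => - / 2 * (
      (Bp h - Bm h - dB * h) * (/ 2 * (Jp h + Jm h))
    + dB / 2 * h ^ 1 * (Jp h + Jm h - a * h ^ p)
    + ((Bp h + Bm h) / 2 - B0) * (Jp h - Jm h)
    + B0 * (Jp h - Jm h - b * h ^ S p)) / h)).
  { intros h Hh. simpl pow. field. lra. }
  apply bigO_div, bigO_scal. replace (S (p + 2)) with (p + 3)%nat by lia.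
  apply bigO_add; [apply bigO_add; [apply bigO_add |] |].
  - apply (bigO_weaken (3 + p)); [lia |]. apply bigO_mul; [exact HdB | now apply bigO_scal].
  - apply (bigO_weaken (1 + (p + 2))); [lia |].
    apply bigO_mul; [apply bigO_monomial | exact Hsum].
  - apply (bigO_weaken (2 + S p)); [lia |]. apply bigO_mul; assumption.
  - now apply bigO_scal.
Qed.

Lemma Eerr_expansion (u D : R -> R) (Dbar : R -> R -> R) kappa kappa3 j x p a b :
  smooth1 u -> smooth1 D -> smooth2 Dbar ->
  (forall a b, Dbar a b = Dbar b a) -> (forall v, Dbar v v = D v) ->
  bigO (p + 2) (fun h => jump kappa kappa3 (gridvals u x h j) h j
                         + jump kappa kappa3 (gridvals u x h j) h (j - 1) - a * h ^ p) ->
  bigO (p + 3) (fun h => jump kappa kappa3 (gridvals u x h j) h j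
                         - jump kappa kappa3 (gridvals u x h j) h (j - 1) - b * h ^ S p) ->
  bigO (p + 2) (fun h => Eerr Dbar kappa kappa3 (gridvals u x h j) h j
    + (Derive (fun t => D (u t)) x * a / 2 + D (u x) * b) / 2 * h ^ p).
Proof.
  intros Hu HD HDbar Hsym Hdiag Hsum Hdiff.
  eapply bigO_ext; [| exact (flux_difference_expansion p
    (fun h => Dbar (u x) (u (x + h))) (fun h => Dbar (u (x - h)) (u x))
    (fun h => jump kappa kappa3 (gridvals u x h j) h j)
    (fun h => jump kappa kappa3 (gridvals u x h j) h (j - 1)) _ _ a b
    (face_coeff_diff u D Dbar x Hu HD HDbar Hsym Hdiag)
    (face_coeff_mean u D Dbar x Hu HDbar Hsym Hdiag) Hsum Hdiff)].
  intros h _. unfold Eerr, Phi, jump. grid_nodes.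
  replace (x + 0 * h) with x by ring. replace (x + 1 * h) with (x + h) by ring.
  replace (x + -1 * h) with (x - h) by ring.
  reflexivity.
Qed.

Theorem mainTheorem1 :
  forall (u D : R -> R) (Dbar : R -> R -> R) (kappa : R),
    smooth1 u -> smooth1 D -> smooth2 Dbar ->
    (forall a b, Dbar a b = Dbar b a) ->
    (forall v, Dbar v v = D v) ->
    forall (j : Z) (x : R),
      let dDx := Derive (fun t => D (u t)) x in
      (* (i) kappa3 = kappa - 1 : E_j = (kappa-1)/32 [D_x u^(5) + D u^(6)] h^5 + O(h^7) *)
      (exists C delta : R, 0 < delta /\
         forall h : R, 0 < h < delta ->
           Rabs (Eerr Dbar kappa (kappa - 1) (gridvals u x h j) h j
                 - (kappa - 1) / 32
                   * (dDx * Derive_n u 5 x + D (u x) * Derive_n u 6 x) * h ^ 5)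
           <= C * h ^ 7) /\
      (* (ii) kappa3 = 0 : E_j = -(kappa-1)/8 [D_x u''' + D u''''] h^3 + O(h^5) *)
      (exists C delta : R, 0 < delta /\
         forall h : R, 0 < h < delta ->
           Rabs (Eerr Dbar kappa 0 (gridvals u x h j) h j
                 - (- ((kappa - 1) / 8))
                   * (dDx * Derive_n u 3 x + D (u x) * Derive_n u 4 x) * h ^ 3)
           <= C * h ^ 5).
Proof.
  intros u D Dbar kappa Hu HD HDbar Hsym Hdiag j x dDx.
  destruct (jump_expansions_kappa3_eq u x kappa j Hu) as [Hsum1 Hdiff1].
  destruct (jump_expansions_kappa3_zero u x kappa j Hu) as [Hsum2 Hdiff2].
  split.
  - eapply bigO_ext; [| exact (Eerr_expansion u D Dbar kappa (kappa - 1) j x 5 _ _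
                                 Hu HD HDbar Hsym Hdiag Hsum1 Hdiff1)].
    intros h _. unfold dDx. field.
  - eapply bigO_ext; [| exact (Eerr_expansion u D Dbar kappa 0 j x 3 _ _
                                 Hu HD HDbar Hsym Hdiag Hsum2 Hdiff2)].
    intros h _. unfold dDx. field.
Qed.
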